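(* Let $G$ and $K$ be countable sets, let $m\in\mathbb N^+$, let $T\in\Lambda^G_m$ be an $m$-parent transmission function over $G$, and let $\beta:G\rightarrow K$ be a surjective function such that $T$ is ambivalent under $\beta$, with theme transmission function $T^{\overrightarrow\beta}\in\Lambda^K_m$. Then for every $p\in\Lambda^G$, \[\Xi_\beta(\mathcal V_T p)=\mathcal V_{T^{\overrightarrow\beta}}(\Xi_\beta p),\] i.e. $\mathcal V_T$ is globally coarsenable under $\beta$ with quotient $\mathcal V_{T^{\overrightarrow\beta}}$.
   Context: For a set $X$, $\Lambda^X$ denotes the set of distributions over $X$, i.e. functions $p:X\rightarrow[0,1]$ with $\sum_{x\in X}p(x)=1$. For $m\in\mathbb N^+$, an $m$-parent transmission function over $X$ is a function $T:\prod_1^{m+1}X\rightarrow[0,1]$, written $T(x|x_1,\ldots,x_m)$, such that for all $x_1,\ldots,x_m\in X$, $\sum_{x\in X}T(x|x_1,\ldots,x_m)=1$; the set of these is $\Lambda^X_m$. For $T\in\Lambda^X_m$ ($X$ countable), the variation operator $\mathcal V_T:\Lambda^X\rightarrow\Lambda^X$ is $(\mathcal V_Tp)(x)=\sum_{(x_1,\ldots,x_m)\in\prod_1^m X}T(x|x_1,\ldots,x_m)\prod_{i=1}^m p(x_i)$. For a function $\beta:X\rightarrow Y$ and $y\in Y$, $\langle y\rangle_\beta=\{x\in X\mid\beta(x)=y\}$. The projection operator $\Xi_\beta:\Lambda^X\rightarrow\Lambda^Y$ is $(\Xi_\beta p)(y)=\sum_{x\in\langle y\rangle_\beta}p(x)$.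 A transmission function $T\in\Lambda^G_m$ is ambivalent under a surjection $\beta:G\rightarrow K$ if there exists $D\in\Lambda^K_m$ such that for all $k,k_1,\ldots,k_m\in K$ and all $x_1\in\langle k_1\rangle_\beta,\ldots,x_m\in\langle k_m\rangle_\beta$, $\sum_{x\in\langle k\rangle_\beta}T(x|x_1,\ldots,x_m)=D(k|k_1,\ldots,k_m)$; this (unique) $D$ is denoted $T^{\overrightarrow\beta}$. *)

(* Countable sets are countTypes;
   sums over countable sets are order-independent nonnegative sums [esum]
   in the extended reals. *)
From HB Require Import structures.
From mathcomp Require Import all_boot all_order all_algebra.
From mathcomp Require Import all_classical all_reals.
From mathcomp Require Import ereal esum.

Set Implicit Arguments.
Unset Strict Implicit.
Unset Printing Implicit Defensive.

Import Order.TTheory GRing.Theory Num.Theory.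
Local Open Scope classical_set_scope.
Local Open Scope ring_scope.

Definition psum (R : realType) (X : countType) (A : set X) (f : X -> R) : \bar R :=
  (\esum_(x in A) (f x)%:E)%E.

Definition is_distribution (R : realType) (X : countType) (p : X -> R) : Prop :=
  (forall x, 0 <= p x <= 1) /\ psum setT p = 1%E.

(* T ∈ Λ^X_m ; T x xs stands for T(x | xs_1,...,xs_m) *)
Definition is_transmission (R : realType) (X : countType) (m : nat)
    (T : X -> m.-tuple X -> R) : Prop :=
  forall xs : m.-tuple X, (forall x, 0 <= T x xs <= 1) /\ psum setT (fun x => T x xs) = 1%E.

Definition variation (R : realType) (X : countType) (m : nat)
    (T : X -> m.-tuple X -> R) (p : X -> R) : X -> R :=
  fun x => fine (psum setT (fun xs : m.-tuple X => T x xs * \prod_(i < m) p (tnth xs i))).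

Definition fiber (X Y : Type) (beta : X -> Y) (y : Y) : set X := [set x | beta x = y].

Definition projection (R : realType) (X Y : countType) (beta : X -> Y) (p : X -> R) : Y -> R :=
  fun y => fine (psum (fiber beta y) p).

(* D witnesses that T is ambivalent under beta, i.e. D = T^{->beta} *)
Definition is_theme (R : realType) (G K : countType) (m : nat)
    (T : G -> m.-tuple G -> R) (beta : G -> K) (D : K -> m.-tuple K -> R) : Prop :=
  is_transmission D /\
  forall (k : K) (ks : m.-tuple K) (xs : m.-tuple G),
    (forall i : 'I_m, beta (tnth xs i) = tnth ks i) ->
    psum (fiber beta k) (fun x => T x xs) = (D k ks)%:E.

Definition ambivalent (R : realType) (G K : countType) (m : nat)
    (T : G -> m.-tuple G -> R) (beta : G -> K) : Prop :=
  exists D : K -> m.-tuple K -> R, is_theme T beta D.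

(* At a theme k both sides equal  sum_xs D(k | beta xs) * prod_i p(xs_i).
   On the left, exchange the sum over the fibre of k with the sum over parent
   tuples xs; ambivalence turns sum_{x in fibre k} T(x | xs) into D(k | beta xs).
   On the right, prod_i (Xi p)(k_i) is a product of fibre sums, i.e. the sum of
   prod_i p(xs_i) over the tuples xs with beta xs = ks; summing over ks then
   regroups the tuples xs by their image.  All sums are nonnegative sums in the
   extended reals, and the projection and variation of a distribution are again
   distributions, so every [fine] involved is the value of a finite sum. *)

From HB Require Import structures.
From mathcomp Require Import all_boot all_order all_algebra.
From mathcomp Require Import all_classical all_reals.
From mathcomp Require Import ereal esum.

Set Implicit Arguments.
Unset Strict Implicit.
Unset Printing Implicit Defensive.

Import Order.TTheory GRing.Theory Num.Theory.
Local Open Scope classical_set_scope.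
Local Open Scope ring_scope.

Section esum_lemmas.
Variable R : realType.
Local Open Scope ereal_scope.

Lemma esumZl (T : choiceType) (I : set T) (a : T -> \bar R) (r : R) :
  (0 <= r)%R -> (forall i, 0 <= a i) ->
  \esum_(i in I) (r%:E * a i) = r%:E * \esum_(i in I) a i.
Proof.
move=> r0 a0; rewrite /esum -ereal_supZl //; last first.
  by apply/set0P; exists 0; exists set0; [exact: fsets_set0 | rewrite fsbig_set0].
congr ereal_sup; apply/seteqP; split => x /=.
  move=> [A HA <-]; exists (\sum_(y \in A) a y); first by exists A.
  by rewrite ge0_mule_fsumr.
by move=> [_ [A HA <-] <-]; exists A => //; rewrite ge0_mule_fsumr.
Qed.

Lemma exchange_esum (T1 T2 : choiceType) (A : set T1) (B : set T2)
    (a : T1 -> T2 -> \bar R) : (forall i j, 0 <= a i j) ->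
  \esum_(i in A) \esum_(j in B) a i j = \esum_(j in B) \esum_(i in A) a i j.
Proof.
move=> a0; rewrite (esum_esum (J := fun _ => B)) //.
rewrite (esum_esum (J := fun _ => A)) //.
rewrite (reindex_esum (A `*`` fun _ => B) _ (fun x => (x.2, x.1))) //.
split => /=.
- by move=> [i j] [].
- by move=> [i1 i2] [j1 j2] _ _ [-> ->].
- by move=> [j i] [/= Bj Ai]; exists (i, j).
Qed.

Lemma le_esum_subset (T : choiceType) (A B : set T) (a : T -> \bar R) :
  (forall x, 0 <= a x) -> A `<=` B -> \esum_(x in A) a x <= \esum_(x in B) a x.
Proof.
move=> a0 AB; rewrite esum_mkcond [leRHS]esum_mkcond; apply: le_esum => x _.
case: (boolP (x \in A)) => [/set_mem/AB/mem_set -> // | _].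
by case: ifP.
Qed.

Lemma esum_fibers (X Y : choiceType) (f : X -> Y) (a : X -> \bar R) :
  (forall x, 0 <= a x) ->
  \esum_(y in [set: Y]) \esum_(x in fiber f y) a x = \esum_(x in [set: X]) a x.
Proof.
move=> a0; rewrite esum_esum //.
rewrite (reindex_esum [set: X] _ (fun x => (f x, x))) //; split.
- by move=> x _.
- by move=> x1 x2 _ _ [].
- by move=> [y x] [_ /= <-]; exists x.
Qed.

Lemma esum_tuple_cons (X : choiceType) (m : nat) (A : 'I_m.+1 -> set X)
    (a : m.+1.-tuple X -> \bar R) : (forall xs, 0 <= a xs) ->
  \esum_(xs in [set xs : m.+1.-tuple X | forall i, A i (tnth xs i)]) a xs =
  \esum_(x in A ord0)
    \esum_(t in [set t : m.-tuple X |
                  forall i : 'I_m, A (lift ord0 i) (tnth t i)])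
      a [tuple of x :: t].
Proof.
move=> a0; rewrite esum_esum //; apply: reindex_esum; split.
- move=> [x t] [/= Ax At] i.
  by case: (unliftP ord0 i) => [j ->|->]; rewrite ?tnthS ?tnth0.
- by move=> [x1 t1] [x2 t2] _ _ /(congr1 val) [-> /val_inj ->].
- move=> xs /= Axs; exists (thead xs, behead_tuple xs); last exact/esym/tuple_eta.
  split => [|i /=]; first exact: Axs.
  rewrite tnth_behead (_ : inord i.+1 = lift ord0 i) //.
  by apply: val_inj; rewrite /= inordK // ltnS.
Qed.

Lemma esum_tuple_prod (X : choiceType) (m : nat) (A : 'I_m -> set X)
    (p : X -> R) :
  (forall x, 0 <= p x)%R -> (forall i, \esum_(x in A i) (p x)%:E \is a fin_num) ->
  \esum_(xs in [set xs : m.-tuple X | forall i, A i (tnth xs i)])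
     (\prod_(i < m) p (tnth xs i))%:E
  = (\prod_(i < m) fine (\esum_(x in A i) (p x)%:E))%:E.
Proof.
move=> p0; elim: m A => [|m IH] A finA.
  rewrite big_ord0 (_ : [set xs | _] = [set [tuple]]); last first.
    by apply/seteqP; split => [xs _ | xs _ []]; rewrite /= ?tuple0.
  by rewrite esum_set1 big_ord0.
have pE0 x : 0 <= (p x)%:E by rewrite lee_fin.
have prod_ge0 n (t : n.-tuple X) : 0 <= (\prod_(i < n) p (tnth t i))%:E.
  by rewrite lee_fin prodr_ge0.
have fine_prod_ge0 n (B : 'I_n -> set X) :
    (0 <= \prod_(i < n) fine (\esum_(x in B i) (p x)%:E))%R.
  by apply: prodr_ge0 => i _; rewrite fine_ge0 // esum_ge0.
rewrite esum_tuple_cons //.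
under eq_esum => x _.
  under eq_esum => t _.
    rewrite big_ord_recl tnth0 EFinM.
    under eq_bigr => i _ do rewrite tnthS.
    over.
  rewrite (esumZl _ (p0 x) (prod_ge0 _)).
  rewrite (IH (fun i => A (lift ord0 i))) // muleC.
  over.
rewrite (esumZl _ (fine_prod_ge0 _ _) pE0).
by rewrite big_ord_recl EFinM muleC fineK.
Qed.

End esum_lemmas.

Lemma fiber_map_tuple (X Y : Type) (f : X -> Y) (m : nat) (ks : m.-tuple Y) :
  fiber (map_tuple f) ks = [set xs | forall i, fiber f (tnth ks i) (tnth xs i)].
Proof.
apply/seteqP; split => xs /=; first by move=> <- i; rewrite /fiber tnth_map.
by move=> fxs; apply: eq_from_tnth => i; rewrite tnth_map fxs.
Qed.

Section distributions.
Variable R : realType.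

Lemma distribution_ge0 (X : countType) (p : X -> R) :
  is_distribution p -> forall x, 0 <= p x.
Proof. by move=> [p01 _] x; case/andP: (p01 x). Qed.

Lemma psum1_distribution (X : countType) (p : X -> R) :
  (forall x, 0 <= p x) -> psum setT p = 1%E -> is_distribution p.
Proof.
move=> p0 p1; split => // x; rewrite p0 /= -lee_fin -p1 /psum.
rewrite -(@esum_set1 _ _ x (fun y => (p y)%:E)) ?lee_fin //.
by apply: le_esum_subset => // y; rewrite lee_fin.
Qed.

Lemma psum_distribution_fin_num (X : countType) (p : X -> R) (A : set X) :
  is_distribution p -> psum A p \is a fin_num.
Proof.
move=> hp; have p0 y : (0 <= (p y)%:E)%E by rewrite lee_fin distribution_ge0.
rewrite ge0_fin_numE ?esum_ge0 //.
apply: le_lt_trans (le_esum_subset p0 (subsetT A)) _.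
by case: hp => _; rewrite /psum => ->; exact: ltry.
Qed.

Lemma tuple_prod_distribution (X : countType) (m : nat) (p : X -> R) :
  is_distribution p ->
  is_distribution (fun xs : m.-tuple X => \prod_(i < m) p (tnth xs i)).
Proof.
move=> hp; apply: psum1_distribution => [xs|].
  by apply: prodr_ge0 => i _; exact: distribution_ge0.
have := esum_tuple_prod (m := m) (A := fun _ => setT) (distribution_ge0 hp)
  (fun _ => psum_distribution_fin_num setT hp).
rewrite /psum (_ : [set xs | _] = setT) => [->|]; last by apply/seteqP.
by move: hp.2; rewrite /psum => ->; rewrite big1.
Qed.

Section variation.
Variables (X : countType) (m : nat) (T : X -> m.-tuple X -> R) (p : X -> R).
Hypotheses (hT : is_transmission T) (hp : is_distribution p).

Let T_ge0 x xs : 0 <= T x xs. Proof. by case/andP: ((hT xs).1 x). Qed.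

Let prod_ge0 (xs : m.-tuple X) : 0 <= \prod_(i < m) p (tnth xs i).
Proof. exact: distribution_ge0 (tuple_prod_distribution m hp) xs. Qed.

Lemma EFin_variation x : (variation T p x)%:E =
  psum setT (fun xs : m.-tuple X => T x xs * \prod_(i < m) p (tnth xs i)).
Proof.
rewrite fineK // ge0_fin_numE ?esum_ge0 // => [|xs _]; last first.
  by rewrite lee_fin mulr_ge0.
apply: (@le_lt_trans _ _
  (psum setT (fun xs : m.-tuple X => \prod_(i < m) p (tnth xs i)))).
  apply: le_esum => xs _; rewrite lee_fin ler_piMl //.
  by case/andP: ((hT xs).1 x).
by case: (tuple_prod_distribution m hp) => _; rewrite /psum => ->; exact: ltry.
Qed.

Lemma esum_variation (A : set X) :
  (\esum_(x in A) (variation T p x)%:E =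
   \esum_(xs in setT)
     (psum A (fun x => T x xs) * (\prod_(i < m) p (tnth xs i))%:E))%E.
Proof.
under eq_esum => x _ do rewrite EFin_variation.
rewrite exchange_esum => [|x xs]; last by rewrite lee_fin mulr_ge0.
apply: eq_esum => xs _; under eq_esum => x _ do rewrite EFinM muleC.
rewrite esumZl //; last by move=> x; rewrite lee_fin.
exact: muleC.
Qed.

Lemma variation_distribution : is_distribution (variation T p).
Proof.
apply: psum1_distribution => [x|].
  by apply: fine_ge0; apply: esum_ge0 => xs _; rewrite lee_fin mulr_ge0.
rewrite /psum esum_variation.
under eq_esum => xs _ do rewrite (hT xs).2 mul1e.
exact: (tuple_prod_distribution m hp).2.
Qed.

End variation.
End distributions.

Section projection.
Variables (R : realType) (G K : countType) (beta : G -> K) (p : G -> R).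
Hypothesis hp : is_distribution p.

Lemma EFin_projection k : (projection beta p k)%:E = psum (fiber beta k) p.
Proof. exact/fineK/psum_distribution_fin_num. Qed.

Lemma projection_distribution : is_distribution (projection beta p).
Proof.
have pE0 x : (0 <= (p x)%:E)%E by rewrite lee_fin distribution_ge0.
apply: psum1_distribution => [k|]; first by rewrite fine_ge0 // esum_ge0.
rewrite /psum; under eq_esum => k _ do rewrite EFin_projection.
by rewrite /psum esum_fibers //; exact: hp.2.
Qed.

End projection.

Section coarsening.
Variables (R : realType) (G K : countType) (m : nat).
Variables (T : G -> m.-tuple G -> R) (beta : G -> K) (D : K -> m.-tuple K -> R).
Variable p : G -> R.
Hypotheses (hT : is_transmission T) (hD : is_theme T beta D) (hp : is_distribution p).

Let D_ge0 k ks : 0 <= D k ks. Proof. by case/andP: ((hD.1 ks).1 k). Qed.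

Let prod_ge0 (xs : m.-tuple G) : 0 <= \prod_(i < m) p (tnth xs i).
Proof. exact: distribution_ge0 (tuple_prod_distribution m hp) xs. Qed.

Lemma EFin_projection_variation k : (projection beta (variation T p) k)%:E =
  (\esum_(xs in setT) (D k (map_tuple beta xs) * \prod_(i < m) p (tnth xs i))%:E)%E.
Proof.
rewrite (EFin_projection beta (variation_distribution hT hp)) /psum.
rewrite (esum_variation hT hp).
apply: eq_esum => xs _; rewrite EFinM; congr (_ * _)%E.
by apply: hD.2 => i; rewrite tnth_map.
Qed.

Lemma EFin_variation_projection k : (variation D (projection beta p) k)%:E =
  (\esum_(xs in setT) (D k (map_tuple beta xs) * \prod_(i < m) p (tnth xs i))%:E)%E.
Proof.
rewrite (EFin_variation hD.1 (projection_distribution beta hp)) /psum.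
rewrite -(esum_fibers (map_tuple beta)); last by move=> xs; rewrite lee_fin mulr_ge0.
apply: eq_esum => ks _.
rewrite EFinM /projection.
rewrite -(esum_tuple_prod (distribution_ge0 hp)
  (fun i => psum_distribution_fin_num _ hp)).
rewrite -fiber_map_tuple -esumZl //.
by apply: eq_esum => xs <-; rewrite EFinM.
Qed.

End coarsening.

Theorem theorem1 (R : realType) (G K : countType) (m : nat) (hm : (0 < m)%N)
  (T : G -> m.-tuple G -> R) (beta : G -> K)
  (hT : is_transmission T)
  (hsurj : forall k : K, exists g : G, beta g = k)
  (hamb : ambivalent T beta)
  (D : K -> m.-tuple K -> R) (hD : is_theme T beta D) :
  forall p : G -> R, is_distribution p ->
    projection beta (variation T p) = variation D (projection beta p).
Proof.
move=> p hp; apply/funext => k; apply: EFin_inj.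
by rewrite (EFin_projection_variation hT hD hp) (EFin_variation_projection hD hp).
Qed.
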